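(* Up to multiplication by a positive integer, every basic weight of a basic system of type $D$ is one of the following (coordinates $\lambda_k=\langle\lambda,e_k\rangle$): (1) $(D_4,2,2)$: $(1,0,1,0)$, $(0,-1,1,0)$; (2) $(D_5,3,3)$: $(1,0,-1,1,0)$.
   Context: $D_n$ ($n\ge4$) is realized in $\mathbb R^n$ with orthonormal basis $e_1,\dots,e_n$ and standard inner product, simple roots $\alpha_k=e_k-e_{k+1}$ ($k<n$), $\alpha_n=e_{n-1}+e_n$. Let $W$ be the Weyl group, $\alpha^\vee=2\alpha/\langle\alpha,\alpha\rangle$. A weight is integral if $\langle\lambda,\alpha^\vee\rangle\in\mathbb Z$ for all roots $\alpha$; $\overline\lambda$ is the dominant weight in $W\lambda$. For $I=\Delta\setminus\{\alpha_i\}$, $J=\Delta\setminus\{\alpha_j\}$, a basic weight of $(\Phi,i,j)$ is an integral $\lambda$ with $\langle\lambda,\alpha^\vee\rangle\in\mathbb Z_{>0}$ for all $\alpha\in I$ and $\{\alpha\in\Delta:\langle\overline\lambda,\alpha\rangle=0\}=J$; $(\Phi,i,j)$ is a basic system if it has a basic weight. *)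

From HB Require Import structures.
From mathcomp Require Import all_boot all_order all_algebra.
From mathcomp Require Import reals.
Set Implicit Arguments. Unset Strict Implicit. Unset Printing Implicit Defensive.
Import Order.TTheory GRing.Theory Num.Theory.
Local Open Scope ring_scope.

(* Vectors of R^n are functions 'I_n -> R; coordinate k (0-based) is the
   paper's coordinate k+1, i.e. <x, e_{k+1}>. *)
Section DRoot.
Variables (R : realType) (n : nat).

Definition vec := 'I_n -> R.

Definition dotv (x y : vec) : R := \sum_(k < n) x k * y k.

Definition ebasis (k : 'I_n) : vec := fun l => if l == k then 1 else 0.

Definition addv (x y : vec) : vec := fun l => x l + y l.
Definition scalev (c : R) (x : vec) : vec := fun l => c * x l.

Definition is_root (v : vec) : Prop :=
  exists (a b : 'I_n) (s t : bool), a != b /\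
    v = addv (scalev ((-1) ^+ s) (ebasis a)) (scalev ((-1) ^+ t) (ebasis b)).

(* simple roots: alpha_k = e_k - e_{k+1} (k < n-1, 0-based), and
   alpha_{n-1} = e_{n-2} + e_{n-1} (0-based); i.e. the paper's
   alpha_1, ..., alpha_n shifted by one. *)
Definition simple_root (k : 'I_n) : vec := fun l =>
  if (k.+1 < n)%N then
    (if val l == val k then 1 else 0) - (if val l == k.+1 then 1 else 0)
  else
    (if val l == n.-2 then 1 else 0) + (if val l == n.-1 then 1 else 0).

Definition coroot (a : vec) : vec := scalev (2 / dotv a a) a.

Definition reflection (a : vec) (x : vec) : vec :=
  addv x (scalev (- dotv x (coroot a)) a).

(* W-orbit: W is generated by the reflections s_alpha, alpha a root *)
Inductive in_Worbit (lam : vec) : vec -> Prop :=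
| Worb_refl : in_Worbit lam lam
| Worb_step : forall mu a, in_Worbit lam mu -> is_root a ->
    in_Worbit lam (reflection a mu).

Definition is_integral (lam : vec) : Prop :=
  forall a, is_root a -> exists z : int, dotv lam (coroot a) = z%:~R.

Definition is_dominant (mu : vec) : Prop :=
  forall k : 'I_n, 0 <= dotv mu (coroot (simple_root k)).

(* basic weight of (D_n, i, j): I = Delta \ {alpha_i}, J = Delta \ {alpha_j};
   lambda-bar is the dominant weight in W lambda. *)
Definition is_basic_weight (i j : 'I_n) (lam : vec) : Prop :=
  is_integral lam /\
  (forall k : 'I_n, k != i ->
     exists m : nat, (0 < m)%N /\ dotv lam (coroot (simple_root k)) = m%:R) /\
  (exists mu, in_Worbit lam mu /\ is_dominant mu /\
     forall k : 'I_n, dotv mu (simple_root k) = 0 <-> k != j).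

End DRoot.

From Pilot Require Import Defs.
From HB Require Import structures.
From mathcomp Require Import all_boot all_order all_algebra.
From mathcomp Require Import reals.
From mathcomp Require Import ring lra zify.
Set Implicit Arguments. Unset Strict Implicit. Unset Printing Implicit Defensive.
Import Order.TTheory GRing.Theory Num.Theory.
Local Open Scope ring_scope.

(* Let mu be the dominant weight in W lam.  As mu is orthogonal to every simple
   root but alpha_j, its coordinates are (a,...,a,0,...,0), (a,...,a,-a) or
   (a,...,a) with a <> 0, so |mu|^2 = (j + [j = n-1]) a^2.  The Weyl group of D_n
   acts by signed permutations of the coordinates, hence every coordinate of
   lam lies in {-|a|, 0, |a|} and |lam|^2 = |mu|^2.  Since <lam, alpha_k> > 0 for
   k <> i, lam is strictly decreasing away from position i and
   lam_(n-1) + lam_n > 0 unless i = n.  A strictly decreasing run in a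
   three-element set has at most three terms, which forces i = n - 2 and
   n in {4, 5}; comparing |lam|^2 with |mu|^2 then determines j and lam. *)

Section InnerProduct.
Variables (R : realType) (n : nat).
Implicit Types (x y z : vec R n) (c : R).

Lemma dotvC x y : dotv x y = dotv y x.
Proof. by apply: eq_bigr => k _; rewrite mulrC. Qed.

Lemma dotvDr x y z : dotv x (Defs.addv y z) = dotv x y + dotv x z.
Proof. by rewrite /dotv -big_split; apply: eq_bigr => k _; rewrite mulrDr. Qed.

Lemma dotvZr c x y : dotv x (scalev c y) = c * dotv x y.
Proof. by rewrite /dotv mulr_sumr; apply: eq_bigr => k _; rewrite mulrCA. Qed.

Lemma dotvDl x y z : dotv (Defs.addv x y) z = dotv x z + dotv y z.
Proof. by rewrite dotvC dotvDr !(dotvC z). Qed.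

Lemma dotvZl c x y : dotv (scalev c x) y = c * dotv x y.
Proof. by rewrite dotvC dotvZr dotvC. Qed.

Lemma dotv_ebasis x a : dotv x (ebasis R a) = x a.
Proof.
rewrite /dotv (bigD1 a) //= /ebasis eqxx mulr1 big1 ?addr0 // => k /negbTE ->.
by rewrite mulr0.
Qed.

Lemma dotv_coroot x y : dotv y y = 2 -> dotv x (coroot y) = dotv x y.
Proof. by move=> y2; rewrite /coroot dotvZr y2 divff ?mul1r // pnatr_eq0. Qed.

Lemma dotv_reflection y x : dotv y y != 0 ->
  dotv (reflection y x) (reflection y x) = dotv x x.
Proof.
move=> y_neq0; rewrite /reflection /coroot.
rewrite !dotvDl !dotvDr !dotvZl !dotvZr (dotvC y x).
by field.
Qed.

End InnerProduct.

Section Reflections.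
Variables (R : realType) (n : nat) (a b : 'I_n) (s t : bool).
Hypothesis neq_ab : a != b.

Let r : vec R n :=
  Defs.addv (scalev ((-1) ^+ s) (ebasis R a)) (scalev ((-1) ^+ t) (ebasis R b)).

Lemma dotv_root x : dotv x r = (-1) ^+ s * x a + (-1) ^+ t * x b.
Proof. by rewrite dotvDr !dotvZr !dotv_ebasis. Qed.

Lemma dotv_root_root : dotv r r = 2.
Proof.
rewrite dotv_root /r /Defs.addv /scalev /ebasis (negbTE neq_ab) eq_sym (negbTE neq_ab).
by rewrite !eqxx; case: s; case: t; rewrite /= ?expr0 ?expr1; lra.
Qed.

Lemma reflection_rootE x l :
  reflection r x l = x l - ((-1) ^+ s * x a + (-1) ^+ t * x b) * r l.
Proof.
by rewrite /reflection /Defs.addv /scalev dotv_coroot ?dotv_root_root // dotv_root mulNr.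
Qed.

Lemma reflection_root_normr x l : exists k, `|x l| = `|reflection r x k|.
Proof.
have neq_ba : (b == a) = false by rewrite eq_sym (negbTE neq_ab).
have sign_sqr (u : bool) : (-1) ^+ u * (-1) ^+ u = 1 :> R by rewrite -expr2 sqrr_sign.
have [-> | neq_la] := eqVneq l a.
  exists b; rewrite reflection_rootE /r /Defs.addv /scalev /ebasis neq_ba eqxx.
  rewrite mulr0 add0r mulr1 mulrDl [_ * x b * _]mulrAC sign_sqr mul1r.
  by rewrite opprD addrA addrAC subrr sub0r normrN !normrM !normr_sign mulr1 mul1r.
have [-> | neq_lb] := eqVneq l b.
  exists a; rewrite reflection_rootE /r /Defs.addv /scalev /ebasis (negbTE neq_ab) eqxx.
  rewrite mulr0 addr0 mulr1 mulrDl [_ * x a * _]mulrAC sign_sqr mul1r.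
  by rewrite opprD addrA subrr sub0r normrN !normrM !normr_sign mulr1 mul1r.
exists l; rewrite reflection_rootE /r /Defs.addv /scalev /ebasis.
by rewrite (negbTE neq_la) (negbTE neq_lb) !mulr0 addr0 mulr0 subr0.
Qed.

End Reflections.

Section WeylOrbit.
Variables (R : realType) (n : nat).
Implicit Types lam mu : vec R n.

Lemma in_Worbit_dotv lam mu : in_Worbit lam mu -> dotv mu mu = dotv lam lam.
Proof.
elim=> // {}mu _ r IH [a [b [s [t [neq_ab ->]]]]].
by rewrite dotv_reflection ?dotv_root_root // pnatr_eq0.
Qed.

Lemma in_Worbit_normr lam mu :
  in_Worbit lam mu -> forall l, exists k, `|lam l| = `|mu k|.
Proof.
elim=> [l | {}mu _ r IH [a [b [s [t [neq_ab ->]]]]] l]; first by exists l.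
have [k ->] := IH l.
exact: reflection_root_normr.
Qed.

End WeylOrbit.

Section SimplePairing.
Variable R : realType.

Definition simple_pairing (x : nat -> R) (p k : nat) : R :=
  if (k < p)%N then x k - x k.+1 else x p.-1 + x p.

Definition trivalued (c x : R) := [\/ x = - c, x = 0 | x = c].

Lemma trivalued_le c x : 0 <= c -> trivalued c x -> x <= c.
Proof. by move=> c_ge0 [] ->; lra. Qed.

Lemma trivalued_normr c x y : trivalued c y -> `|x| = `|y| -> trivalued `|c| x.
Proof.
move=> y_tri x_y; have [x_c | x0] : `|x| = `|c| \/ `|x| = 0.
- by case: y_tri x_y => -> ->; rewrite ?normrN ?normr0; [left | right | left].
- move/eqP: x_c; rewrite eqr_norml normr_ge0 andbT => /orP[] /eqP ->.
    by constructor 3.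
  by constructor 1.
- by constructor 2; apply/normr0_eq0.
Qed.

Lemma trivalued_decreasing3 c x y z : 0 < c ->
  trivalued c x -> trivalued c y -> trivalued c z ->
  y < x -> z < y -> [/\ x = c, y = 0 & z = - c].
Proof. by move=> c_gt0; case=> ->; case=> ->; case=> -> => ? ?; split; lra. Qed.

Lemma trivalued_tail c y z : 0 < c -> trivalued c y -> trivalued c z ->
  z < y -> 0 < y + z -> y = c /\ z = 0.
Proof. by move=> c_gt0; case=> ->; case=> -> => ? ?; split; lra. Qed.

Lemma trivalued_decreasing2 c x y : 0 < c -> trivalued c x -> trivalued c y -> y < x ->
  [\/ x = c /\ y = 0, x = c /\ y = - c | x = 0 /\ y = - c].
Proof. by move=> c_gt0; case=> ->; case=> -> => ?; first [lra | constructor; split; done]. Qed.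

Section Orthogonal.
Variables (G : nat -> R) (p j : nat).
Hypotheses (p_gt0 : (0 < p)%N) (j_le_p : (j <= p)%N).
Hypothesis G_perp : forall k, (k <= p)%N -> simple_pairing G p k = 0 <-> k != j.

Let G_step k : (k < p)%N -> k != j -> G k.+1 = G k.
Proof.
move=> k_lt_p k_neq_j; have := proj2 (G_perp (ltnW k_lt_p)) k_neq_j.
rewrite /simple_pairing k_lt_p; lra.
Qed.

Let G_head k : (k <= j)%N -> G k = G 0.
Proof.
elim: k => // k IH k_lt_j; rewrite G_step ?IH //; lia.
Qed.

Let G_tail k : (j < k <= p)%N -> G k = G j.+1.
Proof.
elim: k => [|k IH] /andP[j_lt_k k_le_p]; first by [].
have [-> // | j_neq_k] := eqVneq j k.
rewrite G_step ?IH //; lia.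
Qed.

Let G_last_neq0 : p = j -> G p.-1 + G p != 0.
Proof.
move=> p_eq_j; apply/eqP => G_last0.
have := proj1 (G_perp (leqnn p)); rewrite /simple_pairing ltnn.
by move/(_ G_last0); rewrite p_eq_j eqxx.
Qed.

Lemma orthogonal_shape : G 0 != 0 /\
  forall k, (k <= p)%N -> G k = if (k <= j)%N then G 0 else if j.+1 == p then - G 0 else 0.
Proof.
have [p_eq_j | p_neq_j] := eqVneq p j.
  have G_all k : (k <= p)%N -> G k = G 0 by rewrite p_eq_j; apply: G_head.
  have := G_last_neq0 p_eq_j; rewrite !G_all ?leq_pred // => G0_sum.
  split; first by apply: contraNneq G0_sum => ->; rewrite addr0.
  by move=> k k_le_p; rewrite -p_eq_j k_le_p G_all.
have j_lt_p : (j < p)%N by rewrite ltn_neqAle eq_sym p_neq_j.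
have G_next : G j.+1 = if j.+1 == p then - G 0 else 0.
  have := proj2 (G_perp (leqnn p)) p_neq_j; rewrite /simple_pairing ltnn.
  case: eqP => [j1_eq_p | j1_neq_p].
    by rewrite -j1_eq_p /= G_head //; lra.
  by rewrite !G_tail; [lra | lia | lia].
have G_shape k : (k <= p)%N -> G k = if (k <= j)%N then G 0 else G j.+1.
  by move=> k_le_p; case: leqP => [/G_head | j_lt_k] //; rewrite G_tail ?j_lt_k.
split.
  have := proj1 (G_perp (ltnW j_lt_p)); rewrite /simple_pairing j_lt_p G_head // G_next.
  move=> pairing_j; apply/eqP => G0_eq0.
  suff /pairing_j : G 0 - (if j.+1 == p then - G 0 else 0) = 0 by rewrite eqxx.
  by rewrite G0_eq0 oppr0 if_same subr0.
by move=> k /G_shape ->; rewrite G_next.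
Qed.

Lemma orthogonal_sum_sqr :
  \sum_(0 <= k < p.+1) G k ^+ 2 = (j.+1 + (j.+1 == p))%:R * G 0 ^+ 2.
Proof.
have [_ G_shape] := orthogonal_shape.
have head : \sum_(0 <= k < j.+1) G k ^+ 2 = G 0 ^+ 2 *+ j.+1.
  rewrite -{2}[j.+1]subn0 -sumr_const_nat; apply: eq_big_nat => k /andP[_].
  by rewrite ltnS => k_le_j; rewrite G_shape ?k_le_j //; apply: leq_trans j_le_p.
have tail : \sum_(j.+1 <= k < p.+1) G k ^+ 2 = G 0 ^+ 2 *+ (j.+1 == p).
  rewrite (@eq_big_nat _ _ _ _ _ _ (fun=> if j.+1 == p then G 0 ^+ 2 else 0)).
    rewrite sumr_const_nat.
    by case: (j.+1 =P p) => [<- | _]; rewrite ?subSnn ?mul0rn.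
  move=> k /andP[j_lt_k k_le_p]; rewrite G_shape // leqNgt j_lt_k /=.
  by case: (j.+1 == p); rewrite ?sqrrN ?expr0n.
by rewrite (@big_cat_nat _ _ _ j.+1) //= head tail -mulrnDr mulr_natl.
Qed.

Lemma orthogonal_trivalued k : (k <= p)%N -> trivalued (G 0) (G k).
Proof.
have [_ G_shape] := orthogonal_shape.
by move=> /G_shape ->; case: ifP => _; [constructor 3 | case: ifP => _; constructor].
Qed.

End Orthogonal.
Section PositivePairing.
Variables (c : R) (L : nat -> R) (p i : nat).
Hypotheses (c_gt0 : 0 < c) (p_ge3 : (3 <= p)%N) (i_le_p : (i <= p)%N).
Hypothesis L_tri : forall l, (l <= p)%N -> trivalued c (L l).
Hypothesis L_pos : forall k, (k <= p)%N -> k != i -> 0 < simple_pairing L p k.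

Let L_dec k : (k < p)%N -> k != i -> L k.+1 < L k.
Proof.
by move=> k_lt_p k_neq_i; have := L_pos (ltnW k_lt_p) k_neq_i; rewrite /simple_pairing k_lt_p subr_gt0.
Qed.

Let L_last : p != i -> 0 < L p.-1 + L p.
Proof. by move=> p_neq_i; have := L_pos (leqnn p) p_neq_i; rewrite /simple_pairing ltnn. Qed.

Let L_chain3 k : (k.+2 <= p)%N -> k != i -> k.+1 != i ->
  [/\ L k = c, L k.+1 = 0 & L k.+2 = - c].
Proof.
move=> k2_le_p k_neq_i k1_neq_i.
apply: trivalued_decreasing3 => //; try (apply: L_tri; lia); apply: L_dec => //; lia.
Qed.

Let L_tail : (i.+1 < p)%N -> L p.-1 = c /\ L p = 0.
Proof.
move=> i1_lt_p; have p_eq : p = p.-1.+1 by lia.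
apply: trivalued_tail => //; [apply: L_tri; lia | apply: L_tri; lia | | apply: L_last; lia].
by rewrite {1}p_eq; apply: L_dec; lia.
Qed.

Lemma trivalued_pairing_pos_shape :
  [/\ p = 3%N, i = 1%N, L 1 < L 0, L 2 = c & L 3 = 0] \/
  [/\ p = 4%N, i = 2%N, L 0 = c, L 1 = 0 & [/\ L 2 = - c, L 3 = c & L 4 = 0]].
Proof.
have L_le l : (l <= p)%N -> L l <= c by move=> /L_tri; apply: trivalued_le; apply: ltW.
have [q p_eq] : exists q, p = q.+3 by exists (p - 3)%N; lia.
have [i_eq | [i_eq | [i_eq | i_le_q]]] :
    i = q.+3 \/ i = q.+2 \/ i = q.+1 \/ (i <= q)%N by lia.
- have [_ Lq1 _] := @L_chain3 q ltac:(lia) ltac:(lia) ltac:(lia).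
  have [Lq1' _ _] := @L_chain3 q.+1 ltac:(lia) ltac:(lia) ltac:(lia).
  by move: c_gt0; rewrite -Lq1' Lq1 ltxx.
- have [_ _ Lq2] := @L_chain3 q ltac:(lia) ltac:(lia) ltac:(lia).
  have := L_last ltac:(lia); rewrite p_eq /= Lq2 addrC subr_gt0 ltNge L_le //; lia.
- move: (L_tail ltac:(lia)); rewrite p_eq /=.
  case: q p_eq i_eq => [|[|q]] p_eq i_eq [Lq2 Lq3].
  + by left; split => //; apply: L_dec; lia.
  + have [L0 L1 L2] := @L_chain3 0 ltac:(lia) ltac:(lia) ltac:(lia).
    by right; split.
  + have [_ L1 _] := @L_chain3 0 ltac:(lia) ltac:(lia) ltac:(lia).
    have [L1' _ _] := @L_chain3 1 ltac:(lia) ltac:(lia) ltac:(lia).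
    by move: c_gt0; rewrite -L1' L1 ltxx.
- have [Lq2 _] := L_tail ltac:(lia); have := L_dec (k := q.+1) ltac:(lia) ltac:(lia).
  by rewrite -[q.+2]/(q.+3.-1) -p_eq Lq2 ltNge L_le //; lia.
Qed.

End PositivePairing.

End SimplePairing.

Section Coordinates.
Variables (R : realType) (p : nat).
Implicit Types x y : vec R p.+1.

Definition coord_seq x (k : nat) : R := x (inord k).

Lemma coord_seq_ord x (k : 'I_p.+1) : coord_seq x k = x k.
Proof. by rewrite /coord_seq inord_val. Qed.

Lemma coord_seq_ext x (f : nat -> R) :
  (forall k, (k <= p)%N -> coord_seq x k = f k) -> forall k : 'I_p.+1, x k = f k.
Proof. by move=> x_f k; rewrite -coord_seq_ord x_f // -ltnS. Qed.

Lemma dotv_coord_seq x y :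
  dotv x y = \sum_(0 <= k < p.+1) coord_seq x k * coord_seq y k.
Proof. by rewrite big_mkord; apply: eq_bigr => k _; rewrite !coord_seq_ord. Qed.

Let sum_delta x (a : nat) : (a <= p)%N ->
  \sum_(l < p.+1) x l * (if val l == a then 1 else 0) = coord_seq x a.
Proof.
move=> a_le_p; rewrite (bigD1 (inord a)) //= inordK // eqxx mulr1 big1 ?addr0 //.
move=> l l_neq_a; case: eqP => [l_a | _]; last by rewrite mulr0.
by move: l_neq_a; rewrite -l_a inord_val eqxx.
Qed.

Lemma dotv_simple_root x (k : 'I_p.+1) :
  dotv x (simple_root R k) = simple_pairing (coord_seq x) p k.
Proof.
rewrite /dotv /simple_root /simple_pairing ltnS; case: ifP => k_lt_p.
  under eq_bigr => l _ do rewrite mulrBr.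
  by rewrite sumrB !sum_delta // -ltnS ltnW.
under eq_bigr => l _ do rewrite mulrDr.
by rewrite big_split /= !sum_delta ?leq_pred.
Qed.

Lemma simple_root_norm (k : 'I_p.+1) : (0 < p)%N ->
  dotv (simple_root R k) (simple_root R k) = 2.
Proof.
move=> p_gt0; rewrite dotv_simple_root /simple_pairing /coord_seq /simple_root /=.
case: ifP => k_lt_p.
  have k_lt_p1 : (k < p.+1)%N by rewrite ltnS ltnW.
  rewrite ltnS k_lt_p (inordK k_lt_p1) (@inordK p k.+1) // !eqxx.
  by rewrite (gtn_eqF (ltnSn _)) (ltn_eqF (ltnSn _)); lra.
have pred_neq_p : (p.-1 == p) = false by apply/eqP; lia.
rewrite ltnS k_lt_p (@inordK p p.-1) ?ltnS ?leq_pred // inordK //.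
by rewrite pred_neq_p eq_sym pred_neq_p !eqxx; lra.
Qed.

Lemma dotv_coroot_simple_root x (k : 'I_p.+1) : (0 < p)%N ->
  dotv x (coroot (simple_root R k)) = dotv x (simple_root R k).
Proof. by move=> p_gt0; rewrite dotv_coroot ?simple_root_norm. Qed.

Lemma eq_inord (k : nat) (j : 'I_p.+1) : (k <= p)%N -> (inord k == j) = (k == j).
Proof. by move=> k_le_p; rewrite -(inj_eq val_inj) /= inordK. Qed.

Lemma basic_weight_coord_seq (i j : 'I_p.+1) (lam : vec R p.+1) :
  (0 < p)%N -> is_basic_weight i j lam ->
  exists2 c : R, 0 < c &
  [/\ forall l, (l <= p)%N -> trivalued c (coord_seq lam l),
      forall k, (k <= p)%N -> k != i ->
        exists2 m : nat, (0 < m)%N & simple_pairing (coord_seq lam) p k = m%:R &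
      \sum_(0 <= k < p.+1) coord_seq lam k ^+ 2 = (j.+1 + (j.+1 == p))%:R * c ^+ 2].
Proof.
move=> p_gt0 [_ [lam_pos [mu [lam_mu [_ mu_perp]]]]].
have G_perp k : (k <= p)%N -> simple_pairing (coord_seq mu) p k = 0 <-> k != j.
  by move=> k_le_p; have := mu_perp (inord k); rewrite dotv_simple_root inordK // eq_inord.
have [G0_neq0 _] := orthogonal_shape p_gt0 (leq_ord j) G_perp.
exists `|coord_seq mu 0|; first by rewrite normr_gt0.
split.
- move=> l _; have [k lam_mu_k] := in_Worbit_normr lam_mu (inord l).
  apply: (trivalued_normr _ lam_mu_k); rewrite -coord_seq_ord.
  exact: orthogonal_trivalued p_gt0 (leq_ord j) G_perp _ (leq_ord k).
- move=> k k_le_p k_neq_i; have [|m [m_gt0 m_eq]] := lam_pos (inord k).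
    by rewrite eq_inord.
  by exists m; rewrite // -m_eq dotv_coroot_simple_root // dotv_simple_root inordK.
rewrite real_normK ?num_real // -(orthogonal_sum_sqr p_gt0 (leq_ord j) G_perp).
have sum_sqr x : \sum_(0 <= k < p.+1) coord_seq x k ^+ 2 = dotv x x.
  by rewrite dotv_coord_seq; apply: eq_bigr => k _; rewrite expr2.
by rewrite !sum_sqr (in_Worbit_dotv lam_mu).
Qed.

End Coordinates.

Lemma eq_natr_mul_sqr (R : realType) (c : R) (a b : nat) :
  c != 0 -> a%:R * c ^+ 2 = b%:R * c ^+ 2 -> a = b.
Proof. by move=> c_neq0 /(mulIf (expf_neq0 2 c_neq0))/eqP; rewrite eqr_nat => /eqP. Qed.

Section SmallRank.
Variables (R : realType) (c : R) (L : nat -> R) (j : nat).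
Hypothesis c_gt0 : 0 < c.

Lemma D4_weight_shape : (j <= 3)%N ->
  trivalued c (L 0) -> trivalued c (L 1) -> L 1 < L 0 -> L 2 = c -> L 3 = 0 ->
  \sum_(0 <= k < 4) L k ^+ 2 = (j.+1 + (j.+1 == 3%N))%:R * c ^+ 2 ->
  j = 1%N /\
  [\/ forall k, (k <= 3)%N -> L k = (L 0 - L 1) * nth 0 [:: 1; 0; 1; 0] k
    | forall k, (k <= 3)%N -> L k = (L 0 - L 1) * nth 0 [:: 0; -1; 1; 0] k].
Proof.
move=> j_le3 L0_tri L1_tri L10 L2 L3.
rewrite !big_nat_recr //= big_geq // L2 L3 => norm.
have norm_nat (N : nat) : L 0 ^+ 2 + L 1 ^+ 2 = N%:R * c ^+ 2 ->
    N.+1 = (j.+1 + (j.+1 == 3%N))%N.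
  move=> L01; apply: (eq_natr_mul_sqr (lt0r_neq0 c_gt0)).
  by rewrite -norm -addn1 natrD mulrDl -L01; ring.
case: (trivalued_decreasing2 c_gt0 L0_tri L1_tri L10) => -[L0 L1].
- have /norm_nat N2 : L 0 ^+ 2 + L 1 ^+ 2 = 1%:R * c ^+ 2 by rewrite L0 L1; ring.
  split; first by lia.
  by left; case=> [|[|[|[|k]]]] //= _; rewrite ?L0 ?L1 ?L2 ?L3; ring.
- have /norm_nat : L 0 ^+ 2 + L 1 ^+ 2 = 2%:R * c ^+ 2 by rewrite L0 L1; ring.
  lia.
- have /norm_nat N2 : L 0 ^+ 2 + L 1 ^+ 2 = 1%:R * c ^+ 2 by rewrite L0 L1; ring.
  split; first by lia.
  by right; case=> [|[|[|[|k]]]] //= _; rewrite ?L0 ?L1 ?L2 ?L3; ring.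
Qed.

Lemma D5_weight_shape : (j <= 4)%N ->
  L 0 = c -> L 1 = 0 -> L 2 = - c -> L 3 = c -> L 4 = 0 ->
  \sum_(0 <= k < 5) L k ^+ 2 = (j.+1 + (j.+1 == 4%N))%:R * c ^+ 2 ->
  j = 2%N /\ forall k, (k <= 4)%N -> L k = (L 0 - L 1) * nth 0 [:: 1; 0; -1; 1; 0] k.
Proof.
move=> j_le4 L0 L1 L2 L3 L4.
rewrite !big_nat_recr //= big_geq // L0 L1 L2 L3 L4 => norm.
have /(eq_natr_mul_sqr (lt0r_neq0 c_gt0)) : 3%:R * c ^+ 2 = (j.+1 + (j.+1 == 4%N))%:R * c ^+ 2.
  by rewrite -norm; ring.
move=> N3; split; first by lia.
by case=> [|[|[|[|[|k]]]]] //= _; rewrite ?L0 ?L1 ?L2 ?L3 ?L4; ring.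
Qed.

End SmallRank.

Theorem theorem5p10 (R : realType) (n : nat) (i j : 'I_n) (lam : 'I_n -> R) :
  (4 <= n)%N ->
  is_basic_weight i j lam ->
  exists m : nat, (0 < m)%N /\
    ((n = 4%N /\ val i = 1%N /\ val j = 1%N /\
       ((forall k : 'I_n, lam k = m%:R * nth 0 [:: 1; 0; 1; 0] k) \/
        (forall k : 'I_n, lam k = m%:R * nth 0 [:: 0; -1; 1; 0] k))) \/
     (n = 5%N /\ val i = 2%N /\ val j = 2%N /\
       (forall k : 'I_n, lam k = m%:R * nth 0 [:: 1; 0; -1; 1; 0] k))).
Proof.
case: n i j lam => [//|p] i j lam n_ge4 lam_basic.
have [c c_gt0 [L_tri L_int norm]] := basic_weight_coord_seq (ltnW (ltnW n_ge4)) lam_basic.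
set L := coord_seq lam in L_tri L_int norm.
have L_pos k : (k <= p)%N -> k != i -> 0 < simple_pairing L p k.
  by move=> k_le_p k_neq_i; have [m m_gt0 ->] := L_int k k_le_p k_neq_i; rewrite ltr0n.
case: (trivalued_pairing_pos_shape c_gt0 n_ge4 (leq_ord i) L_tri L_pos)
  => [[p3 i1 L10 L2 L3] | [p4 i2 L0 L1 [L2 L3 L4]]]; subst p.
- have [|m m_gt0 L01] := L_int 0%N isT; first by rewrite i1.
  have [j1 L_shape] := D4_weight_shape c_gt0 (leq_ord j) (L_tri 0%N isT) (L_tri 1%N isT) L10 L2 L3 norm.
  exists m; split => //; left; do 3!split => //.
  rewrite /simple_pairing /= in L01; rewrite L01 in L_shape.
  by case: L_shape => L_shape; [left | right]; exact: coord_seq_ext L_shape.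
- have [|m m_gt0 L01] := L_int 0%N isT; first by rewrite i2.
  have [j2 L_shape] := D5_weight_shape c_gt0 (leq_ord j) L0 L1 L2 L3 L4 norm.
  exists m; split => //; right; do 3!split => //.
  rewrite /simple_pairing /= in L01; rewrite L01 in L_shape.
  exact: coord_seq_ext L_shape.
Qed.
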